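(* Let $E$ be a finite set and let $\mathcal{Q}\subseteq 2^E$ be a weakly Rayleigh set-system. If $\varnothing\in\mathcal{Q}$ and $E\in\mathcal{Q}$, then $\mathcal{Q}=2^E$.
   Context: For $\omega:2^E\to[0,\infty)$ not identically zero, $Z(\omega;\mathbf{y})=\sum_{S\subseteq E}\omega(S)\prod_{e\in S}y_e$. With $Z_e=\partial Z/\partial y_e$, $Z_{ef}=\partial^2Z/\partial y_e\partial y_f$, $\Delta Z\{e,f\}=Z_eZ_f-Z_{ef}Z$, $Z$ is Rayleigh if $\Delta Z\{e,f\}(\mathbf{y})\ge0$ for all distinct $e,f$ and all $\mathbf{y}$ with all $y_c>0$. $\mathcal{Q}$ is weakly Rayleigh if there is $\omega\ge0$ with $\{S:\omega(S)>0\}=\mathcal{Q}$ and $Z(\omega;\mathbf{y})$ Rayleigh. *)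

From HB Require Import structures.
From mathcomp Require Import all_boot all_order all_algebra.
From mathcomp Require Import reals.
Set Implicit Arguments. Unset Strict Implicit. Unset Printing Implicit Defensive.
Import Order.TTheory GRing.Theory Num.Theory.
Local Open Scope ring_scope.

Section Rayleigh.
Variables (R : realType) (E : finType).

Definition Zpoly (w : {set E} -> R) (y : E -> R) : R :=
  \sum_(S : {set E}) w S * \prod_(e in S) y e.

(* partial derivative dZ/dy_e of the multiaffine polynomial Z (term-wise) *)
Definition Zd1 (w : {set E} -> R) (e : E) (y : E -> R) : R :=
  \sum_(S : {set E} | e \in S) w S * \prod_(c in S :\ e) y c.

(* second partial derivative d^2Z/dy_e dy_f, e <> f (term-wise) *)
Definition Zd2 (w : {set E} -> R) (e f : E) (y : E -> R) : R :=
  \sum_(S : {set E} | (e \in S) && (f \in S)) w S * \prod_(c in S :\ e :\ f) y c.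

Definition DeltaZ (w : {set E} -> R) (e f : E) (y : E -> R) : R :=
  Zd1 w e y * Zd1 w f y - Zd2 w e f y * Zpoly w y.

Definition rayleigh (w : {set E} -> R) : Prop :=
  forall e f : E, e != f -> forall y : E -> R, (forall c, 0 < y c) ->
    0 <= DeltaZ w e f y.

Definition weakly_rayleigh (Q : {set {set E}}) : Prop :=
  exists w : {set E} -> R,
    [/\ forall S, 0 <= w S,
        exists S, w S != 0,
        forall S, (0 < w S) <-> S \in Q
      & rayleigh w].
End Rayleigh.

From HB Require Import structures.
From mathcomp Require Import all_boot all_order all_algebra.
From mathcomp Require Import reals.
From mathcomp Require Import ring zify.
Set Implicit Arguments. Unset Strict Implicit. Unset Printing Implicit Defensive.
Import Order.TTheory GRing.Theory Num.Theory.
Local Open Scope ring_scope.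

(** Fix distinct e, f and integer weights x, and put y_c = K^(x c).  Writing
    Z = P00 + y_e P10 + y_f P01 + y_e y_f P11, the Rayleigh inequality reads
    P11 P00 <= P10 P01; letting K grow compares leading exponents: the largest
    x-weight (outside e, f) of a supported set avoiding e and f, plus that of
    a supported set containing both, is at most the largest weight of a
    supported set with only e plus that of one with only f.  Two choices of x
    turn this into statements about the support: if A and A + e + f are
    supported then so is A + f; and a supported A with a supported proper
    superset has a supported superset A + c.  By induction on the size of the
    complement, every superset of a supported set is then supported, as E is;
    apply this to the empty set. *)

Lemma setDDC (E : finType) (S : {set E}) (a b : E) : S :\ a :\ b = S :\ b :\ a.
Proof. by rewrite !setDDl setUC. Qed.

Lemma setD1_notin (E : finType) (S : {set E}) (a : E) : a \notin S -> S :\ a = S.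
Proof. by move=> aS; apply/setDidPl; rewrite disjoint_sym disjoints1. Qed.

Lemma setD1D (E : finType) (T A : {set E}) (g : E) : T :\ g :\: A = (T :\: A) :\ g.
Proof. by rewrite !setDDl setUC. Qed.

Section Decomposition.
Variables (R : realType) (E : finType) (w : {set E} -> R) (y : E -> R).

(* The coefficient of y_e^a y_f^b when Z is viewed as a polynomial in y_e, y_f. *)
Definition coef (e f : E) (a b : bool) : R :=
  \sum_(S : {set E} | (e \in S == a) && (f \in S == b))
     w S * \prod_(c in S :\ e :\ f) y c.

Lemma coef_swap e f a b : coef f e a b = coef e f b a.
Proof. by apply: eq_big => [S|S _]; rewrite 1?andbC 1?setDDC. Qed.

Lemma prod_setD1_if (T : {set E}) (b : E) :
  \prod_(c in T) y c = (if b \in T then y b else 1) * \prod_(c in T :\ b) y c.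
Proof.
by case: ifPn => bT; [rewrite (big_setD1 b) | rewrite mul1r setD1_notin].
Qed.

Section Pair.
Variables (e f : E).
Hypothesis ef : e != f.

Lemma in_setD1_other (S : {set E}) : (f \in S :\ e) = (f \in S).
Proof. by rewrite !inE eq_sym ef. Qed.

Lemma Zpoly_decomp : Zpoly w y =
  coef e f false false + y e * coef e f true false + y f * coef e f false true
  + y e * y f * coef e f true true.
Proof.
rewrite /Zpoly /coef !(big_mkcond (fun S => _ && _)) !mulr_sumr -!big_split /=.
apply: eq_bigr => S _.
rewrite (prod_setD1_if S e) (prod_setD1_if (S :\ e) f) in_setD1_other.
by case: (e \in S); case: (f \in S) => /=; ring.
Qed.

Lemma Zd1_decomp : Zd1 w e y = coef e f true false + y f * coef e f true true.
Proof.
rewrite /Zd1 /coef [LHS]big_mkcond !(big_mkcond (fun S => _ && _)) mulr_sumr.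
rewrite -big_split /=; apply: eq_bigr => S _.
rewrite (prod_setD1_if (S :\ e) f) in_setD1_other.
by case: (e \in S); case: (f \in S) => /=; ring.
Qed.

Lemma Zd2_decomp : Zd2 w e f y = coef e f true true.
Proof. by apply: eq_bigl => S; rewrite !eqb_id. Qed.

End Pair.

Lemma DeltaZ_decomp e f : e != f -> DeltaZ w e f y =
  coef e f true false * coef e f false true - coef e f true true * coef e f false false.
Proof.
move=> ef; have fe : f != e by rewrite eq_sym.
rewrite /DeltaZ Zd2_decomp (Zpoly_decomp ef) (Zd1_decomp ef) (Zd1_decomp fe).
rewrite !(coef_swap e f); ring.
Qed.

End Decomposition.

Section Tropical.
Variables (R : realType) (E : finType) (w : {set E} -> R).
Hypothesis w_ge0 : forall S, 0 <= w S.

Lemma prod_exprz (K : R) (x : E -> int) (T : {set E}) : K != 0 ->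
  \prod_(c in T) K ^ x c = K ^ (\sum_(c in T) x c).
Proof.
move=> K0; elim/big_rec2: _ => [|c a b _ ->]; first by rewrite expr0z.
by rewrite expfzDr.
Qed.

Lemma coef_ge0 (y : E -> R) e f a b :
  (forall c, 0 <= y c) -> 0 <= coef w y e f a b.
Proof. by move=> y_ge0; apply: sumr_ge0 => S _; rewrite mulr_ge0 ?prodr_ge0. Qed.

Lemma sum_weights_le (P : pred {set E}) : \sum_(S | P S) w S <= \sum_S w S.
Proof. by rewrite [leRHS](bigID P) lerDl sumr_ge0. Qed.

Section Exponents.
Variables (K : R) (x : E -> int) (e f : E) (a b : bool).

Lemma coef_exprz_le (q : int) : 1 <= K ->
  (forall S : {set E}, (e \in S == a) && (f \in S == b) -> 0 < w S ->
     \sum_(c in S :\ e :\ f) x c <= q) ->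
  coef w (fun c => K ^ x c) e f a b <= (\sum_S w S) * K ^ q.
Proof.
move=> K1 xS_le; have K0 : K != 0 by rewrite gt_eqF // (lt_le_trans ltr01).
apply: le_trans
  (_ : \sum_(S : {set E} | (e \in S == a) && (f \in S == b)) w S * K ^ q <= _).
  apply: ler_sum => S PS; rewrite prod_exprz //.
  have [->|wS_neq0] := eqVneq (w S) 0; first by rewrite !mul0r.
  by rewrite ler_wpM2l // ler_weXz2l // xS_le // lt_def wS_neq0 w_ge0.
by rewrite -mulr_suml ler_wpM2r ?sum_weights_le // exprz_ge0 // (le_trans ler01).
Qed.

Lemma coef_exprz_ge (T : {set E}) : 0 < K ->
  (e \in T == a) && (f \in T == b) ->
  w T * K ^ (\sum_(c in T :\ e :\ f) x c) <= coef w (fun c => K ^ x c) e f a b.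
Proof.
move=> K_gt0 PT; rewrite /coef (bigD1 T) //= prod_exprz ?gt_eqF // lerDl.
apply: sumr_ge0 => S _; rewrite mulr_ge0 // prodr_ge0 // => c _.
by rewrite exprz_ge0 // ltW.
Qed.

End Exponents.

Hypothesis w_rayleigh : rayleigh w.

Lemma rayleigh_tropical (e f : E) (x : E -> int) (T1 T2 : {set E}) (qe qf : int) :
  e != f -> e \notin T1 -> f \notin T1 -> e \in T2 -> f \in T2 ->
  0 < w T1 -> 0 < w T2 ->
  (forall S : {set E}, e \in S -> f \notin S -> 0 < w S ->
     \sum_(c in S :\ e :\ f) x c <= qe) ->
  (forall S : {set E}, e \notin S -> f \in S -> 0 < w S ->
     \sum_(c in S :\ e :\ f) x c <= qf) ->
  \sum_(c in T1 :\ e :\ f) x c + \sum_(c in T2 :\ e :\ f) x c <= qe + qf.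
Proof.
move=> ef eT1 fT1 eT2 fT2 wT1 wT2 le_qe le_qf.
set W := \sum_S w S; set s1 := \sum_(c in T1 :\ e :\ f) x c.
set s2 := \sum_(c in T2 :\ e :\ f) x c.
pose c1 := w T1 * w T2; have c1_gt0 : 0 < c1 by rewrite mulr_gt0.
pose K := W ^+ 2 / c1 + 1.
have K_ge1 : 1 <= K by rewrite lerDr divr_ge0 ?sqr_ge0 ?ltW.
have K_gt0 : 0 < K by rewrite (lt_le_trans ltr01).
have K_neq0 : K != 0 by rewrite gt_eqF.
have K_large : W ^+ 2 < c1 * K by rewrite mulrDr mulr1 mulrC divfK ?gt_eqF // ltrDl.
pose y c := K ^ x c; have y_gt0 c : 0 < y c by rewrite exprz_gt0.
have := w_rayleigh ef y_gt0; rewrite DeltaZ_decomp // subr_ge0 => rayK.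
have lower : c1 * K ^ (s1 + s2) <= coef w y e f true true * coef w y e f false false.
  rewrite expfzDr // mulrACA mulrC; apply: ler_pM.
  - by rewrite mulr_ge0 ?exprz_ge0 ?ltW.
  - by rewrite mulr_ge0 ?exprz_ge0 ?ltW.
  - by apply: coef_exprz_ge; rewrite ?eT2 ?fT2.
  - by apply: coef_exprz_ge; rewrite ?eqbF_neg ?eT1 ?fT1.
have upper : coef w y e f true false * coef w y e f false true <= W ^+ 2 * K ^ (qe + qf).
  rewrite expfzDr // expr2 mulrACA; apply: ler_pM.
  - by apply: coef_ge0 => c; rewrite ltW.
  - by apply: coef_ge0 => c; rewrite ltW.
  - by apply: coef_exprz_le => // S; rewrite eqb_id eqbF_neg => /andP[]; apply: le_qe.
  - by apply: coef_exprz_le => // S; rewrite eqb_id eqbF_neg => /andP[]; apply: le_qf.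
rewrite leNgt; apply/negP => lt_s.
have : c1 * (K ^ (qe + qf) * K) <= W ^+ 2 * K ^ (qe + qf).
  apply: le_trans (le_trans lower (le_trans rayK upper)).
  rewrite ler_pM2l // -[X in _ * X]expr1z -expfzDr //.
  by apply: ler_weXz2l; rewrite // lezD1.
by rewrite mulrA mulrAC ler_pM2r ?exprz_gt0 // leNgt K_large.
Qed.

End Tropical.

Section Weights.
Variables (E : finType) (A : {set E}) (N : nat).

Definition weight (c : E) : int := if c \in A then N%:Z else -1.

Lemma sum_weight (T : {set E}) :
  \sum_(c in T) weight c = (N * #|T :&: A|)%:Z - #|T :\: A|%:Z.
Proof.
rewrite (big_setID A) /=.
rewrite (eq_bigr (fun=> N%:Z)) => [|c]; last by rewrite /weight => /setIP[_ ->].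
rewrite [X in _ + X](eq_bigr (fun=> -1)) => [|c]; last first.
  by rewrite /weight => /setDP[_ /negbTE ->].
by rewrite !sumr_const !pmulrn !mulrzz PoszM; lia.
Qed.

Lemma sum_weight_sub (T : {set E}) : A \subset T ->
  \sum_(c in T) weight c = (N * #|A|)%:Z - #|T :\: A|%:Z.
Proof. by move=> AT; rewrite sum_weight (setIidPr AT). Qed.

Lemma sum_weight_le (T : {set E}) (m : nat) : (m <= N)%N ->
  (A \subset T -> m <= #|T :\: A|)%N ->
  \sum_(c in T) weight c <= (N * #|A|)%:Z - m%:Z.
Proof.
move=> le_mN le_mTA; have [AT|nAT] := boolP (A \subset T).
  by rewrite sum_weight_sub //; have := le_mTA AT; lia.
have ltTA : (#|T :&: A| < #|A|)%N by rewrite proper_card // properIr.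
by rewrite sum_weight; nia.
Qed.

End Weights.

Section Support.
Variables (R : realType) (E : finType) (w : {set E} -> R).
Hypotheses (w_ge0 : forall S, 0 <= w S) (w_rayleigh : rayleigh w).

Lemma support_midpoint (A : {set E}) (e f : E) : e != f -> e \notin A -> f \notin A ->
  0 < w A -> 0 < w (e |: (f |: A)) -> 0 < w (f |: A).
Proof.
move=> ef eA fA wA wT; apply: contraT => wfA.
(* With weight 1 on A and -1 elsewhere, A and e |: (f |: A) both score #|A|,
   and f |: A is the only set with f but not e that could score #|A|. *)
have eT : e \in e |: (f |: A) by rewrite setU11.
have fT : f \in e |: (f |: A) by rewrite !in_setU1 eqxx orbT.
have le10 (S : {set E}) : e \in S -> f \notin S -> 0 < w S ->
    \sum_(c in S :\ e :\ f) weight A 1 c <= (1 * #|A|)%:Z - 0%:Z.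
  by move=> *; apply: sum_weight_le.
have le01 (S : {set E}) : e \notin S -> f \in S -> 0 < w S ->
    \sum_(c in S :\ e :\ f) weight A 1 c <= (1 * #|A|)%:Z - 1%:Z.
  move=> eS fS wS; apply: sum_weight_le => // AS'.
  rewrite card_gt0 setD_eq0; apply: contra wfA => S'A.
  have SA : S :\ e :\ f = A by apply/eqP; rewrite eqEsubset S'A AS'.
  by rewrite -SA (setD1_notin eS) setD1K.
have T2E : (e |: (f |: A)) :\ e :\ f = A by rewrite !setU1K // in_setU1 negb_or ef.
have := rayleigh_tropical w_ge0 w_rayleigh ef eA fA eT fT wA wT le10 le01.
by rewrite T2E !setD1_notin // sum_weight_sub // setDv cards0; lia.
Qed.

Lemma card_minimal_supported_superset (A S : {set E}) :
  0 < w A -> 0 < w S -> A \subset S ->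
  (forall T : {set E}, A \proper T -> 0 < w T -> (#|S :\: A| <= #|T :\: A|)%N) ->
  (#|S :\: A| <= 1)%N.
Proof.
move=> wA wS AS Smin; rewrite leqNgt; apply/negP => /card_gt1P[c [d [cSA dSA cd]]].
move: (cSA) (dSA); rewrite !inE => /andP[cA cS] /andP[dA dS].
set k := #|S :\: A|.
(* With weight k on A and -1 elsewhere, minimality of S caps every set with
   exactly one of c, d at k #|A| - (k - 1), while A and S score
   2 k #|A| - (k - 2) together. *)
have le_k (g h : E) (T : {set E}) : g \notin A -> g \in T -> h \notin T -> 0 < w T ->
    \sum_(z in T :\ g :\ h) weight A k z <= (k * #|A|)%:Z - (k - 1)%:Z.
  move=> gA gT hT wT; apply: sum_weight_le => [|AT']; first exact: leq_subr.
  have AT : A \proper T.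
    apply/properP; split; last by exists g.
    by apply: subset_trans AT' (subset_trans (subD1set _ _) (subD1set _ _)).
  have := Smin T AT wT; rewrite -/k.
  rewrite (setD1_notin (a := h)) ?in_setD1 ?negb_and ?hT ?orbT // setD1D.
  by rewrite [#|T :\: A|](cardsD1 g) inE gA gT /= add1n leq_subLR add1n.
have le10 (T : {set E}) : c \in T -> d \notin T -> 0 < w T -> _ := le_k c d T cA.
have le01 (T : {set E}) : c \notin T -> d \in T -> 0 < w T ->
    \sum_(z in T :\ c :\ d) weight A k z <= (k * #|A|)%:Z - (k - 1)%:Z.
  by move=> cT dT wT; rewrite setDDC; apply: le_k.
have := rayleigh_tropical w_ge0 w_rayleigh cd cA dA cS dS wA wS le10 le01.
have AS' : A \subset S :\ c :\ d by rewrite !subsetD1 AS cA dA.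
have A'E : A :\ c :\ d = A by rewrite !setD1_notin.
rewrite A'E !sum_weight_sub // setDv cards0 [S :\ c :\ d :\: A]setD1D setD1D.
have : k = #|S :\: A :\ c :\ d|.+2.
  by rewrite /k (cardsD1 c) cSA (cardsD1 d) !inE (eq_sym d) cd dA dS.
lia.
Qed.

Lemma support_step_up (A B : {set E}) : 0 < w A -> A \proper B -> 0 < w B ->
  exists2 c, c \notin A & 0 < w (c |: A).
Proof.
move=> wA AB wB; pose P (T : {set E}) := (A \proper T) && (0 < w T).
have PB : P B by rewrite /P AB wB.
case: (arg_minnP (fun T => #|T :\: A|) PB) => S /andP[AS wS] Smin.
have /cards1P[c SAc] : #|S :\: A| == 1%N.
  rewrite eqn_leq card_minimal_supported_superset ?(proper_sub AS) //=.
    by move: AS; rewrite properE card_gt0 setD_eq0 => /andP[].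
  by move=> T AT wT; apply: Smin; rewrite /P AT.
have SE : S = c |: A.
  by rewrite -[LHS](setID S A) (setIidPr (proper_sub AS)) SAc setUC.
exists c; last by rewrite -SE.
by have := set11 c; rewrite -SAc inE => /andP[].
Qed.

Lemma support_upclosed_from (A : {set E}) (c : E) : c \notin A -> 0 < w A ->
  (forall S : {set E}, c |: A \subset S -> 0 < w S) ->
  forall S : {set E}, A \subset S -> 0 < w S.
Proof.
move=> cA wA wcA S; have [n] := ubnP #|S|; elim: n S => // n IHn S /ltnSE-leSn AS.
have [cS|cNS] := boolP (c \in S); first by apply: wcA; rewrite subUset sub1set cS.
have [-> //|SA] := eqVneq S A.
have /set0Pn[f] : S :\: A != set0.
  by rewrite setD_eq0; apply: contraNN SA => SsubA; rewrite eqEsubset SsubA.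
rewrite inE => /andP[fA fS].
have cf : c != f by apply: contraNneq cNS => ->.
have wSf : 0 < w (S :\ f).
  apply: IHn; first by apply: leq_trans leSn; rewrite (cardsD1 f S) fS.
  by rewrite subsetD1 AS.
have := support_midpoint cf _ _ wSf; rewrite setD1K // => -> //.
- by rewrite in_setD1 negb_and cNS orbT.
- by rewrite setD11.
- by apply: wcA; rewrite setUS.
Qed.

Lemma support_upclosed (A S : {set E}) : 0 < w [set: E] -> 0 < w A -> A \subset S ->
  0 < w S.
Proof.
move=> wT; have [n] := ubnP #|~: A|; elim: n A S => // n IHn A S /ltnSE-leAn wA AS.
have [AT|ATneq] := eqVneq A setT; first by move: AS; rewrite AT subTset => /eqP ->.
have [c cA wcA] : exists2 c, c \notin A & 0 < w (c |: A).
  by apply: support_step_up wA _ wT; rewrite properT.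
apply: (support_upclosed_from cA wA) AS => T cAT; apply: IHn cAT => //.
apply: leq_trans leAn; apply: proper_card; rewrite properC.
by apply: properUr; rewrite sub1set.
Qed.

End Support.

Unset Implicit Arguments.

Theorem theorem4p2 (R : realType) (E : finType) (Q : {set {set E}}) :
  weakly_rayleigh R Q -> set0 \in Q -> [set: E] \in Q -> Q = [set: {set E}].
Proof.
move=> [w [w_ge0 _ w_supp w_rayleigh]] Q0 QE; apply/setP => S; rewrite inE.
apply/w_supp/(support_upclosed w_ge0 w_rayleigh (A := set0)); rewrite ?sub0set //.
all: exact/w_supp.
Qed.
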